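(* Let $f:D\to\{0,1\}$, $D\subseteq\{0,1\}^n$, be an $n$-bit partial Boolean function that depends on $n$ bits. Then $f$ can be computed exactly by a quantum 1-query algorithm if and only if either $n=1$, $D=\{0,1\}$ and $f(x)=x_1$ or $f(x)=1\oplus x_1$; or $n=2$, $D\subseteq\{0,1\}^2$ with $|D|\in\{3,4\}$, and $f(x)=x_1\oplus x_2$ or $f(x)=1\oplus x_1\oplus x_2$ for all $x\in D$.
   Context: An $n$-bit partial Boolean function is a map $f:D\to\{0,1\}$ with $D\subseteq\{0,1\}^n$. A multilinear polynomial $p$ in $x_1,\dots,x_n$ represents $f$ if $p(x)=f(x)$ for all $x\in D$. $f$ depends on $k$ bits if $k$ is the minimum, over all multilinear polynomials representing $f$, of the number of variables occurring in the polynomial. A quantum 1-query algorithm works in a finite-dimensional Hilbert space with orthonormal basis $\{|i,j'\rangle\}$, $i\in\{0,1,\dots,n\}$, $j'$ in a finite set; for input $x$ the oracle is $O_x|i,j'\rangle=(-1)^{x_i}|i,j'\rangle$ for $i\ge1$ and $O_x|0,j'\rangle=|0,j'\rangle$. The algorithm applies input-independent unitaries $U_0$, then $O_x$, then $U_1$ to an initial state $|\psi_0\rangle$ and performs a projective measurement with outcomes in $\{0,1\}$; it computes $f$ exactly if for every $x\in D$ the outcome is $f(x)$ with probability 1. *)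

From mathcomp Require Import all_boot all_algebra.
From mathcomp Require Import Rstruct.
From mathcomp.real_closed Require Import complex.
Set Implicit Arguments. Unset Strict Implicit. Unset Printing Implicit Defensive.
Import GRing.Theory Num.Theory.
Local Open Scope ring_scope.

Definition C : numClosedFieldType := Rdefinitions.R[i].
Definition RR : realFieldType := Rdefinitions.R.

(** Inputs x in {0,1}^n ; variable x_{k+1} is [x (k : 'I_n)]. *)
Notation bits n := {ffun 'I_n -> bool}.

(** [xb x k] is the bit x_{k+1} (0-based index k), false if k >= n. *)
Definition xb n (x : bits n) (k : nat) : bool :=
  if insub k is Some i then x i else false.

Definition mlpoly (n : nat) := {set 'I_n} -> RR.

Definition mleval n (p : mlpoly n) (x : bits n) : RR :=
  \sum_(S : {set 'I_n}) p S * \prod_(i in S) (x i)%:R.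

Definition represents n (D : {set bits n}) (f : bits n -> bool) (p : mlpoly n) : Prop :=
  forall x, x \in D -> mleval p x = (f x)%:R.

Definition mlvars n (p : mlpoly n) : {set 'I_n} :=
  [set i : 'I_n | [exists S : {set 'I_n}, (p S != 0) && (i \in S)]].

Definition depends_on_bits n (D : {set bits n}) (f : bits n -> bool) (k : nat) : Prop :=
  (exists p : mlpoly n, represents D f p /\ #|mlvars p| = k) /\
  (forall p : mlpoly n, represents D f p -> (k <= #|mlvars p|)%N).

(** ---- Quantum 1-query algorithms ----
    Hilbert space with orthonormal basis |i, j'>, i in {0..n}, j' in 'I_m. *)
Definition QIdx (n m : nat) : finType := ('I_n.+1 * 'I_m)%type.
Definition qdim (n m : nat) : nat := #|{: QIdx n m}|.

Definition adj (p q : nat) (M : 'M[C]_(p, q)) : 'M[C]_(q, p) := (map_mx Num.conj M)^T.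

Definition unitary d (U : 'M[C]_d) : Prop := U *m adj U = 1%:M.

Definition sqnorm d (v : 'cV[C]_d) : C := \sum_(k < d) `|v k 0| ^+ 2.

Definition proj_meas d (P0 P1 : 'M[C]_d) : Prop :=
  [/\ P0 + P1 = 1%:M, P0 *m P0 = P0, P1 *m P1 = P1, adj P0 = P0 & adj P1 = P1].

(** The oracle O_x |i,j'> = (-1)^{x_i} |i,j'> for i >= 1, and |0,j'> -> |0,j'>. *)
Definition oracle n m (x : bits n) : 'M[C]_(qdim n m) :=
  diag_mx (\row_(k < qdim n m)
     (if unlift ord0 (enum_val k : QIdx n m).1 is Some j then (-1) ^+ (x j) else 1)).

Definition exact_1query n (D : {set bits n}) (f : bits n -> bool) : Prop :=
  exists (m : nat) (psi0 : 'cV[C]_(qdim n m)) (U0 U1 P0 P1 : 'M[C]_(qdim n m)),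
    [/\ sqnorm psi0 = 1, unitary U0, unitary U1, proj_meas P0 P1 &
        forall x, x \in D ->
          sqnorm ((if f x then P1 else P0) *m (U1 *m (oracle m x *m (U0 *m psi0)))) = 1].

(* If f depends on all n bits, Mobius inversion on the subset
   lattice shows that f is sensitive to every bit: for each i some x, y in D
   differ only at bit i and f x <> f y.  For an exact algorithm with query state
   v = U0 psi0, the measurement forces O_x v and O_y v to be orthogonal whenever
   f x <> f y; their inner product is |v|^2 - 2 sum_{j : x_j <> y_j} W_j, where the
   query weights W_j of v sum to at most 1.  Sensitivity gives W_j = 1/2 for all j,
   hence n <= 2, and every value change inside D is a single bit flip, so f is
   the parity of its input up to a constant.  Sensitivity to one (two) bits puts
   two (three) inputs in D, which is the whole cube when n = 1.

   Query the superposition of two basis states (no query and x_1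
   for n = 1, x_1 and x_2 for n = 2) and test whether the state is unchanged:
   this measures whether the two phases agree, i.e. the xor of the phase bits. *)
From mathcomp Require Import all_boot all_algebra.
From Stdlib Require Import Classical.
From mathcomp Require Import zify.
Set Implicit Arguments. Unset Strict Implicit. Unset Printing Implicit Defensive.
Import GRing.Theory Num.Theory.
Local Open Scope ring_scope.

(** The coefficient
    [p S = h S - \sum_(U \proper S) p U] is computed by recursion with fuel [k]. *)
Fixpoint mobius (I : finType) (h : {set I} -> RR) (k : nat) (S : {set I}) : RR :=
  if k is k'.+1 then h S - \sum_(U : {set I} | U \proper S) mobius h k' U else 0.

Lemma mobius_stable (I : finType) (h : {set I} -> RR) (k : nat) (S : {set I}) :
  (#|S| < k)%N -> mobius h k S = mobius h k.+1 S.
Proof.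
elim: k S => // k IH S ltSk.
rewrite [mobius h k.+1 S]/= [mobius h k.+2 S]/=; congr (_ - _); apply: eq_bigr => U ltUS.
by apply: IH; apply: leq_trans (proper_card ltUS) _.
Qed.

Lemma mobius_inversion (I : finType) (h : {set I} -> RR) :
  exists p : {set I} -> RR,
    forall X : {set I}, \sum_(T : {set I} | T \subset X) p T = h X.
Proof.
exists (mobius h #|I|.+1) => X; rewrite (bigD1 X) //.
rewrite -[RHS](subrK (\sum_(U : {set I} | U \proper X) mobius h #|I| U)).
apply: f_equal2 => //; apply: eq_big => [U|U]; first by rewrite properEneq andbC.
rewrite andbC -properEneq => ltUX; rewrite -mobius_stable //.
exact: leq_trans (proper_card ltUX) (max_card X).
Qed.

Lemma monomial_bits n (x : bits n) (S : {set 'I_n}) :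
  \prod_(i in S) ((x i)%:R : RR) = (S \subset [set i | x i])%:R.
Proof.
have [subS | /subsetPn [i iS]] := boolP (S \subset _).
  by rewrite big1 // => i /(subsetP subS); rewrite inE => ->.
by rewrite inE => /negbTE xi0; rewrite (bigD1 i) //= xi0 mul0r.
Qed.

Lemma mleval_support n (p : mlpoly n) (x : bits n) :
  mleval p x = \sum_(S : {set 'I_n} | S \subset [set i | x i]) p S.
Proof.
rewrite /mleval [RHS]big_mkcond; apply: eq_bigr => S _.
by rewrite monomial_bits; case: ifP; rewrite ?mulr1 ?mulr0.
Qed.

Definition sensitive n (D : {set bits n}) (f : bits n -> bool) (i : 'I_n) : Prop :=
  exists x y, [/\ x \in D, y \in D, (forall j, j != i -> x j = y j) & f x != f y].

(** A function insensitive to bit [i] is represented by a multilinear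
    polynomial not involving [x_i]: interpolate, on the subsets avoiding [i],
    the values of [f] at points of [D] with that support outside [i]. *)
Lemma insensitive_representation n (D : {set bits n}) (f : bits n -> bool) (i : 'I_n) :
  ~ sensitive D f i ->
  exists p : mlpoly n, represents D f p /\ mlvars p \subset [set~ i].
Proof.
move=> insens.
have f_off_i x y : x \in D -> y \in D -> (forall j, j != i -> x j = y j) -> f x = f y.
  move=> xD yD xy; apply/eqP; apply: contraT => fxy; case: insens; by exists x, y.
pose h (Y : {set 'I_n}) : RR :=
  if [pick y in D | [set j | y j] :\ i == Y] is Some y then (f y)%:R else 0.
have [p Hp] := mobius_inversion h.
exists (fun S : {set 'I_n} => if i \in S then 0 else p S); split.
  move=> x xD; rewrite mleval_support.
  transitivity (\sum_(S : {set 'I_n} | S \subset [set j | x j] :\ i) p S).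
    rewrite [RHS]big_mkcond [LHS]big_mkcond /=; apply: eq_bigr => S _.
    by rewrite subsetD1; case: (i \in S); case: (S \subset _).
  rewrite Hp /h; case: pickP => [y /andP [yD /eqP supp_y]|]; last first.
    by move=> /(_ x); rewrite xD eqxx.
  congr (_%:R); rewrite (f_off_i y x yD xD) // => j ji.
  by have := congr1 (fun Y : {set 'I_n} => j \in Y) supp_y; rewrite /= !inE ji.
apply/subsetP => j; rewrite !inE => /existsP [S /andP [pS jS]].
by apply: contraNneq pS => eji; rewrite -eji jS.
Qed.

Lemma sensitive_of_depends n (D : {set bits n}) (f : bits n -> bool) :
  depends_on_bits D f n -> forall i, sensitive D f i.
Proof.
move=> [_ minimal] i; apply: NNPP => /insensitive_representation [p [rep_p vars_p]].
have := leq_trans (minimal p rep_p) (subset_leq_card vars_p).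
by rewrite cardsC1 card_ord; have := ltn_ord i; lia.
Qed.

Lemma adj_mul p q r (A : 'M[C]_(p, q)) (B : 'M[C]_(q, r)) :
  adj (A *m B) = adj B *m adj A.
Proof. by rewrite /adj map_mxM trmx_mul. Qed.

Lemma adjK p q (A : 'M[C]_(p, q)) : adj (adj A) = A.
Proof. by apply/matrixP => i j; rewrite !mxE conjCK. Qed.

Lemma adjB p q (A B : 'M[C]_(p, q)) : adj (A - B) = adj A - adj B.
Proof. by apply/matrixP => i j; rewrite !mxE rmorphB. Qed.

Lemma adj_id d : adj (1%:M : 'M[C]_d) = 1%:M.
Proof. by apply/matrixP => i j; rewrite !mxE eq_sym rmorph_nat. Qed.

Definition cdot d (u w : 'cV[C]_d) : C := (adj u *m w) 0 0.

Lemma sqnorm_cdot d (u : 'cV[C]_d) : sqnorm u = cdot u u.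
Proof. by rewrite /sqnorm /cdot mxE; apply: eq_bigr => k _; rewrite !mxE normCK mulrC. Qed.

Lemma sqnorm_eq0 d (u : 'cV[C]_d) : sqnorm u = 0 -> u = 0.
Proof.
move/eqP; rewrite psumr_eq0 => [/allP u0|k _]; last exact: exprn_ge0.
apply/matrixP => k l; rewrite (ord1 l) mxE.
by apply/eqP; rewrite -normr_eq0 -sqrf_eq0; exact: (u0 k (mem_index_enum k)).
Qed.

Lemma cdot_unitary d (U : 'M[C]_d) (u w : 'cV[C]_d) :
  unitary U -> cdot (U *m u) (U *m w) = cdot u w.
Proof.
by move=> /mulmx1C UU; rewrite /cdot adj_mul mulmxA -(mulmxA (adj u)) UU mulmx1.
Qed.

Lemma proj_meas_orth d (P0 P1 : 'M[C]_d) : proj_meas P0 P1 -> P0 *m P1 = 0.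
Proof.
case=> sum1 P00 _ _ _; have -> : P1 = 1%:M - P0 by rewrite -sum1 addrC addKr.
by rewrite mulmxBr mulmx1 P00 subrr.
Qed.

Lemma proj_meas_sym d (P0 P1 : 'M[C]_d) : proj_meas P0 P1 -> proj_meas P1 P0.
Proof. by case=> sum1 *; split; rewrite // addrC. Qed.

Lemma meas_certain d (P0 P1 : 'M[C]_d) (psi : 'cV[C]_d) :
  proj_meas P0 P1 -> sqnorm psi = 1 -> sqnorm (P0 *m psi) = 1 -> P0 *m psi = psi.
Proof.
move=> meas norm1 certain; have [sum1 P00 P11 sa0 sa1] := meas.
have sqnormP P : P *m P = P -> adj P = P -> sqnorm (P *m psi) = cdot psi (P *m psi).
  by move=> PP saP; rewrite sqnorm_cdot /cdot adj_mul saP -mulmxA (mulmxA P) PP.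
have split1 : sqnorm (P0 *m psi) + sqnorm (P1 *m psi) = 1.
  have : cdot psi ((P0 + P1) *m psi) = 1 by rewrite sum1 mul1mx -sqnorm_cdot.
  by rewrite /cdot mulmxDl mulmxDr mxE -!/(cdot _ _) !sqnormP.
have /sqnorm_eq0 miss : sqnorm (P1 *m psi) = 0.
  by move: split1; rewrite certain => /(canRL (addKr 1)); rewrite addNr.
by rewrite -[RHS]mul1mx -sum1 mulmxDl miss addr0.
Qed.

Section Oracle.
Variables n m : nat.
Implicit Types (x y : bits n) (v : 'cV[C]_(qdim n m)).

(** The diagonal entry of the oracle [O_x] at the basis state [k]: the basis
    state queries bit [j] when its register is [lift ord0 j], nothing when it is [0]. *)
Definition qsign x (k : 'I_(qdim n m)) : C :=
  if unlift ord0 (enum_val k : QIdx n m).1 is Some j then (-1) ^+ (x j) else 1.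

Definition queries (k : 'I_(qdim n m)) (j : 'I_n) : C :=
  ((enum_val k : QIdx n m).1 == lift ord0 j)%:R.

Definition query_weight v (j : 'I_n) : C := \sum_k `|v k 0| ^+ 2 * queries k j.

Lemma oracle_mulE x v : oracle m x *m v = \col_k (qsign x k * v k 0).
Proof. by apply/matrixP => k l; rewrite (ord1 l) mul_diag_mx !mxE. Qed.

Lemma qsign_conj x k : (qsign x k)^* = qsign x k.
Proof. by rewrite /qsign; case: unlift => [j|]; rewrite ?rmorphXn ?rmorphN1 ?rmorph1. Qed.

Lemma qsign_prod x y k :
  qsign x k * qsign y k = 1 - 2 * \sum_j ((x j != y j) : nat)%:R * queries k j.
Proof.
rewrite /qsign /queries; case: unliftP => [j0 -> | ->]; last first.
  rewrite big1 ?mulr0 ?subr0 ?mulr1 // => j _.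
  by rewrite eq_sym (negbTE (neq_lift _ _)) mulr0.
rewrite (bigD1 j0) // big1 ?addr0 => [|j jj0]; last first.
  by rewrite (inj_eq lift_inj) (eq_sym j0) (negbTE jj0) mulr0.
rewrite eqxx mulr1; case: (x j0); case: (y j0);
  by rewrite /= ?expr0 ?expr1 ?addr0 ?mulr0 ?subr0 ?mulr1 ?mul1r ?mulN1r ?opprK //
     mulr2n opprD addrA subrr add0r.
Qed.

Lemma cdot_oracle x y v :
  cdot (oracle m x *m v) (oracle m y *m v) =
  sqnorm v - 2 * \sum_j ((x j != y j) : nat)%:R * query_weight v j.
Proof.
transitivity (\sum_k `|v k 0| ^+ 2 * (qsign x k * qsign y k)).
  rewrite /cdot !oracle_mulE mxE; apply: eq_bigr => k _.
  by rewrite /adj !mxE rmorphM /= qsign_conj normCK mulrACA mulrC (mulrC (v k 0)^*).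
under eq_bigr => k _ do rewrite qsign_prod mulrBr mulr1.
rewrite sumrB; congr (_ - _).
under eq_bigr => k _ do rewrite mulrCA mulr_sumr.
rewrite -mulr_sumr exchange_big; congr (2 * _); apply: eq_bigr => j _.
by rewrite /query_weight mulr_sumr; apply: eq_bigr => k _; rewrite mulrCA.
Qed.

Lemma oracle_isometry x v : sqnorm (oracle m x *m v) = sqnorm v.
Proof. by rewrite sqnorm_cdot cdot_oracle big1 ?mulr0 ?subr0 // => j _; rewrite eqxx mul0r. Qed.

(** Each basis state queries at most one bit, so the query weights sum to at
    most the squared norm. *)
Lemma query_weight_total v : \sum_j query_weight v j <= sqnorm v.
Proof.
rewrite exchange_big; apply: ler_sum => k _; rewrite -mulr_sumr.
rewrite -[X in _ <= X]mulr1 ler_wpM2l ?exprn_ge0 // /queries.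
case: (unliftP ord0 (enum_val k : QIdx n m).1) => [j0 -> | ->].
  rewrite (bigD1 j0) // big1 => [|j jj0]; first by rewrite eqxx /= addr0.
  by rewrite (inj_eq lift_inj) (eq_sym j0) (negbTE jj0).
by rewrite big1 // => j _; rewrite eq_sym (negbTE (neq_lift _ _)).
Qed.

End Oracle.

Lemma exact_orthogonal n (D : {set bits n}) (f : bits n -> bool) :
  exact_1query D f -> exists m (v : 'cV[C]_(qdim n m)), sqnorm v = 1 /\
    forall x y, x \in D -> y \in D -> f x != f y ->
      cdot (oracle m x *m v) (oracle m y *m v) = 0.
Proof.
move=> [m [psi0 [U0 [U1 [P0 [P1 [norm0 uU0 uU1 meas correct]]]]]]].
pose P b := if b then P1 else P0.
have measP b : proj_meas (P b) (P (~~ b)) by case: b; [exact: proj_meas_sym|].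
set v := U0 *m psi0.
have norm_v : sqnorm v = 1 by rewrite sqnorm_cdot cdot_unitary // -sqnorm_cdot.
exists m, v; split => // x y xD yD fxy.
have fixed z : z \in D -> P (f z) *m (U1 *m (oracle m z *m v)) = U1 *m (oracle m z *m v).
  move=> zD; apply: meas_certain (measP (f z)) _ (correct z zD).
  by rewrite sqnorm_cdot cdot_unitary // -sqnorm_cdot oracle_isometry.
rewrite -(cdot_unitary _ _ uU1) -(fixed x xD) -(fixed y yD).
have -> : f y = ~~ f x by move: fxy; case: (f x); case: (f y).
have [_ _ _ selfadj _] := measP (f x).
rewrite /cdot adj_mul selfadj -mulmxA (mulmxA (P _)) (proj_meas_orth (measP _)).
by rewrite mul0mx mulmx0 mxE.
Qed.

Definition hamming n (x y : bits n) : nat := \sum_j (x j != y j).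

Definition parity n (x : bits n) : bool := \big[addb/false]_j x j.

Lemma odd_hamming n (x y : bits n) : odd (hamming x y) = parity x (+) parity y.
Proof.
rewrite /hamming (big_morph odd oddD (erefl : odd 0 = false)) -big_split /=.
by apply: eq_bigr => j _; case: (x j); case: (y j).
Qed.

Lemma xb_ord n (x : bits n) (i : 'I_n) : xb x i = x i.
Proof. by rewrite /xb valK. Qed.

Lemma parity1 (x : bits 1) : parity x = xb x 0.
Proof. by rewrite /parity big_ord_recl big_ord0 addbF (xb_ord x ord0). Qed.

Lemma parity2 (x : bits 2) : parity x = xb x 0 (+) xb x 1.
Proof.
by rewrite /parity !big_ord_recl big_ord0 addbF (xb_ord x ord0) (xb_ord x (lift ord0 ord0)).
Qed.

Lemma sensitive_flip n (f : bits n -> bool) (i : 'I_n) (x y : bits n) :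
  (forall j, j != i -> x j = y j) -> f x != f y -> x i != y i.
Proof.
move=> off_i fxy; apply: contraNneq fxy => xyi; apply/eqP; congr f.
by apply/ffunP => j; case: (eqVneq j i) => [->|/off_i].
Qed.

Lemma two_inputs n (D : {set bits n}) f i : sensitive D f i -> (2 <= #|D|)%N.
Proof.
move=> [x [y [xD yD _ fxy]]]; have xy : x != y by apply: contraNneq fxy => ->.
apply: leq_trans (subset_leq_card (_ : [set x; y] \subset D)); first by rewrite cards2 xy.
by apply/subsetP => z; rewrite !inE => /orP [] /eqP ->.
Qed.

Lemma three_inputs n (D : {set bits n}) f (i j : 'I_n) :
  i != j -> sensitive D f i -> sensitive D f j -> (3 <= #|D|)%N.
Proof.
move=> ij [a [b [aD bD off_i fab]]] [c [d [cD dD off_j fcd]]].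
have ab_j : a j = b j by apply: off_i; rewrite eq_sym.
have cd_j := sensitive_flip off_j fcd.
have ab : a != b by apply: contraNneq fab => ->.
have [e [eD e_new]] : exists e, e \in D /\ e \notin [set a; b].
  case: (boolP (c \in [set a; b])) => cab; last by exists c.
  case: (boolP (d \in [set a; b])) => dab; last by exists d.
  move: cd_j; rewrite !inE in cab dab.
  by case/orP: cab => /eqP ->; case/orP: dab => /eqP ->; rewrite ?ab_j eqxx.
apply: leq_trans (subset_leq_card (_ : e |: [set a; b] \subset D)).
  by rewrite cardsU1 e_new cards2 ab.
by apply/subsetP => z; rewrite !inE => /orP [/eqP ->|/orP [] /eqP ->].
Qed.

Lemma parity_up_to_constant n (D : {set bits n}) (f : bits n -> bool) x0 y0 :
  x0 \in D -> y0 \in D -> f x0 != f y0 ->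
  (forall x y, x \in D -> y \in D -> f x != f y -> odd (hamming x y)) ->
  forall x, x \in D -> f x = parity x (+) (f x0 (+) parity x0).
Proof.
move=> x0D y0D f0 odd_flips.
have same z w : z \in D -> w \in D -> parity z = parity w -> f z = f w.
  move=> zD wD pzw; apply/eqP/negPn/negP => /(odd_flips z w zD wD).
  by rewrite odd_hamming pzw addbb.
have p0 : parity y0 = ~~ parity x0.
  by move: (odd_flips x0 y0 x0D y0D f0); rewrite odd_hamming; case: parity; case: parity.
have fy0 : f y0 = ~~ f x0 by move: f0; case: (f x0); case: (f y0).
move=> x xD; case: (eqVneq (parity x) (parity x0)) => [px | px].
  by rewrite (same x x0) // px; case: (f x0); case: (parity x0).
have {}px : parity x = parity y0 by move: px; rewrite p0; case: parity; case: parity.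
by rewrite (same x y0) // px fy0 p0; case: (f x0); case: (parity x0).
Qed.

Lemma xor_const_cases (T : Type) (P : T -> Prop) (f g : T -> bool) (c : bool) :
  (forall x, P x -> f x = g x (+) c) ->
  (forall x, P x -> f x = g x) \/ (forall x, P x -> f x = ~~ g x).
Proof. by case: c => fg; [right | left] => x /fg ->; rewrite ?addbT ?addbF. Qed.

(** The query weights of an exact algorithm sum to at most one, and for each
    value change within [D] exactly half of the weight lies on the bits where
    the two inputs differ (orthogonality of the oracle outputs). *)
Lemma exact_query_weights n (D : {set bits n}) (f : bits n -> bool) :
  exact_1query D f -> exists W : 'I_n -> C, \sum_j W j <= 1 /\
    forall x y, x \in D -> y \in D -> f x != f y ->
      2 * \sum_j ((x j != y j) : nat)%:R * W j = 1.
Proof.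
case/exact_orthogonal => m [v [norm1 orth]]; exists (query_weight v).
split=> [|x y xD yD fxy]; first by rewrite -norm1 query_weight_total.
have := orth x y xD yD fxy; rewrite cdot_oracle norm1 => /eqP.
by rewrite subr_eq0 => /eqP <-.
Qed.

(** For a function depending on all [n] bits, full sensitivity forces each
    weight to be one half, hence [n <= 2], and then every value change in [D]
    is a single bit flip. *)
Lemma one_query_constraints n (D : {set bits n}) (f : bits n -> bool) :
  depends_on_bits D f n -> exact_1query D f ->
  (n <= 2)%N /\ forall x y, x \in D -> y \in D -> f x != f y -> hamming x y = 1%N.
Proof.
move=> dep /exact_query_weights [W [total flips]].
have half i : 2 * W i = 1.
  have [x [y [xD yD off_i fxy]]] := sensitive_of_depends dep i.
  rewrite -[RHS](flips x y xD yD fxy) (bigD1 i) // big1 => [|j ji].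
    by rewrite (sensitive_flip off_i fxy) /= mul1r addr0.
  by rewrite off_i // eqxx mul0r.
split=> [|x y xD yD fxy].
  rewrite -(ler_nat C); have -> : (n%:R : C) = 2 * \sum_j W j.
    by rewrite mulr_sumr (eq_bigr _ (fun j _ => half j)) sumr_const card_ord.
  by rewrite -[X in _ <= X]mulr1 ler_wpM2l.
apply/eqP; rewrite -(eqr_nat C) /hamming natr_sum mulr1n -[X in _ == X](flips x y xD yD fxy).
by rewrite mulr_sumr; apply/eqP; apply: eq_bigr => j _; rewrite mulrCA half mulr1.
Qed.

Lemma exact_necessary n (D : {set bits n}) (f : bits n -> bool) :
  (0 < n)%N -> depends_on_bits D f n -> exact_1query D f ->
     (n = 1%N /\ D = [set: bits n] /\
        ((forall x, f x = xb x 0) \/ (forall x, f x = ~~ xb x 0)))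
   \/
     (n = 2%N /\ (#|D| = 3%N \/ #|D| = 4%N) /\
        ((forall x, x \in D -> f x = xb x 0 (+) xb x 1) \/
         (forall x, x \in D -> f x = ~~ (xb x 0 (+) xb x 1)))).
Proof.
move=> n_gt0 dep exact; have [le_n2 flips] := one_query_constraints dep exact.
have sens := sensitive_of_depends dep.
have [x0 [y0 [x0D y0D _ f0]]] := sens (Ordinal n_gt0).
have odd_flips x y : x \in D -> y \in D -> f x != f y -> odd (hamming x y).
  by move=> xD yD fxy; rewrite flips.
have /xor_const_cases f_par := parity_up_to_constant x0D y0D f0 odd_flips.
have [n1 | n2] : n = 1%N \/ n = 2%N by lia.
  left; subst n; have D_full : D = [set: bits 1].
    apply/eqP; rewrite eqEcard subsetT cardsT card_ffun card_bool card_ord.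
    exact: two_inputs (sens ord0).
  split=> //; split=> //; subst D.
  by case: f_par => f_par; [left | right] => x; rewrite f_par ?inE // parity1.
right; subst n; split=> //; split.
  have := three_inputs (neq_lift ord0 ord0) (sens _) (sens _).
  by have := max_card D; rewrite card_ffun card_bool card_ord; lia.
by case: f_par => f_par; [left | right] => x xD; rewrite f_par // parity2.
Qed.

Section RankOne.
Variable d : nat.
Implicit Types (psi phi : 'cV[C]_d).

Definition rank1 psi : 'M[C]_d := psi *m adj psi.

Lemma rank1_mul psi phi : rank1 psi *m phi = cdot psi phi *: psi.
Proof. by rewrite /rank1 -mulmxA [adj psi *m phi]mx11_scalar mul_mx_scalar. Qed.

Lemma cdotZr psi phi (s : C) : cdot psi (s *: phi) = s * cdot psi phi.
Proof. by rewrite /cdot -scalemxAr mxE. Qed.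

Lemma rank1_fix psi (s : C) : sqnorm psi = 1 -> rank1 psi *m (s *: psi) = s *: psi.
Proof. by move=> norm1; rewrite rank1_mul cdotZr -sqnorm_cdot norm1 mulr1. Qed.

Lemma rank1_orth psi phi : cdot psi phi = 0 -> (1%:M - rank1 psi) *m phi = phi.
Proof. by move=> orth; rewrite mulmxBl mul1mx rank1_mul orth scale0r subr0. Qed.

Lemma rank1_meas psi : sqnorm psi = 1 -> proj_meas (rank1 psi) (1%:M - rank1 psi).
Proof.
move=> norm1.
have idem : rank1 psi *m rank1 psi = rank1 psi.
  by rewrite {2}/rank1 mulmxA rank1_mul -sqnorm_cdot norm1 scale1r.
have selfadj : adj (rank1 psi) = rank1 psi by rewrite /rank1 adj_mul adjK.
split=> //; first by rewrite addrC subrK.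
  by rewrite mulmxBl mul1mx mulmxBr mulmx1 idem subrr subr0.
by rewrite adjB adj_id selfadj.
Qed.

Definition ket (k : 'I_d) : 'cV[C]_d := delta_mx k 0.

Lemma cdot_pair (a b : 'I_d) (s t s' t' : C) : a != b ->
  cdot (s *: ket a + t *: ket b) (s' *: ket a + t' *: ket b) = s^* * s' + t^* * t'.
Proof.
move=> ab; rewrite /cdot /ket.
have -> : adj (s *: ket a + t *: ket b) = s^* *: delta_mx 0 a + t^* *: delta_mx 0 b.
  by apply/matrixP => i j; rewrite !mxE rmorphD !rmorphM !rmorph_nat !(andbC (i == 0)).
rewrite mulmxDl !mulmxDr -!scalemxAl -!scalemxAr !mul_delta_mx.
have ba : b != a by rewrite eq_sym.
by rewrite !mul_delta_mx_0 // !mxE !eqxx !mulr0 !mulr1 !addr0 ?add0r ?mulrA.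
Qed.

End RankOne.

Lemma oracle_ket n m (x : bits n) (k : 'I_(qdim n m)) :
  oracle m x *m ket k = qsign x k *: ket k.
Proof.
apply/matrixP => i j; rewrite (ord1 j) oracle_mulE !mxE.
by case: eqP => [-> | _]; rewrite ?mulr0.
Qed.

(** Deutsch-style algorithm: query the uniform superposition of two basis
    states [ka], [kb] and measure whether the two phases agree. *)
Lemma two_state_algorithm n (D : {set bits n}) (f : bits n -> bool)
    (ka kb : 'I_(qdim n 1)) (b : bool) :
  ka != kb ->
  (forall x, x \in D -> exists al be : bool,
     [/\ qsign x ka = (-1) ^+ al, qsign x kb = (-1) ^+ be & f x = al (+) be (+) b]) ->
  exact_1query D f.
Proof.
move=> ab phases; pose r : C := sqrtC 2^-1.
have r2 : r^* * r = 2^-1.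
  by rewrite geC0_conj ?sqrtC_ge0 ?invr_ge0 ?ler0n // -expr2 sqrtCK.
pose psi := r *: ket ka + r *: ket kb.
have norm_psi : sqnorm psi = 1.
  by rewrite sqnorm_cdot cdot_pair // r2 [RHS](splitr 1) mul1r.
pose P t := if t == b then rank1 psi else 1%:M - rank1 psi.
have meas : proj_meas (P false) (P true).
  rewrite /P; case: (b) {P}; [apply: proj_meas_sym |]; exact: rank1_meas.
have unit1 : unitary (1%:M : 'M[C]_(qdim n 1)) by rewrite /unitary adj_id mulmx1.
exists 1%N, psi, 1%:M, 1%:M, (P false), (P true); split=> // x xD.
have [al [be [sa sb fx]]] := phases x xD.
rewrite !mul1mx; set phi := oracle 1 x *m psi.
have phiE : phi = (r * (-1) ^+ al) *: ket ka + (r * (-1) ^+ be) *: ket kb.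
  by rewrite /phi mulmxDr -!scalemxAr !oracle_ket sa sb !scalerA.
have fixed : P (f x) *m phi = phi.
  rewrite /P fx (_ : (al (+) be (+) b == b) = (al == be)); last by case: (al); case: (be); case: (b).
  case: eqP => [al_be | /eqP al_be].
    by rewrite phiE -al_be !(mulrC r) -!scalerA -scalerDr rank1_fix.
  apply: rank1_orth; rewrite phiE cdot_pair // !mulrA r2 -mulrDr.
  by move: al_be; case: (al); case: (be); rewrite // ?expr0 ?expr1 ?addrN ?addNr mulr0.
have -> : (if f x then P true else P false) = P (f x) by case: (f x).
by rewrite fixed oracle_isometry.
Qed.

Definition no_query n : 'I_(qdim n 1) := enum_rank ((ord0, ord0) : QIdx n 1).
Definition query_bit n (j : 'I_n) : 'I_(qdim n 1) :=
  enum_rank ((lift ord0 j, ord0) : QIdx n 1).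

Lemma qsign_no_query n (x : bits n) : qsign x (no_query n) = (-1) ^+ false.
Proof. by rewrite /qsign enum_rankK unlift_none. Qed.

Lemma qsign_query_bit n (x : bits n) (j : 'I_n) : qsign x (query_bit j) = (-1) ^+ x j.
Proof. by rewrite /qsign enum_rankK liftK. Qed.

Lemma query_bit_inj n (i j : 'I_n) : i != j -> query_bit i != query_bit j.
Proof. by move=> ij; rewrite (inj_eq enum_rank_inj) xpair_eqE (inj_eq lift_inj) (negbTE ij). Qed.

Lemma no_query_bit n (j : 'I_n) : no_query n != query_bit j.
Proof. by rewrite (inj_eq enum_rank_inj) xpair_eqE (negbTE (neq_lift _ _)). Qed.

Lemma exact_sufficient n (D : {set bits n}) (f : bits n -> bool) :
     (n = 1%N /\ D = [set: bits n] /\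
        ((forall x, f x = xb x 0) \/ (forall x, f x = ~~ xb x 0)))
   \/
     (n = 2%N /\ (#|D| = 3%N \/ #|D| = 4%N) /\
        ((forall x, x \in D -> f x = xb x 0 (+) xb x 1) \/
         (forall x, x \in D -> f x = ~~ (xb x 0 (+) xb x 1)))) ->
  exact_1query D f.
Proof.
case=> [[n1 [_ f1]] | [n2 [_ f2]]]; subst n.
  have [b fb] : exists b, forall x, f x = false (+) x ord0 (+) b.
    by case: f1 => f1; [exists false | exists true]; move=> x; rewrite f1 (xb_ord x ord0) ?addbT ?addbF.
  apply: (two_state_algorithm (no_query_bit ord0)) => x _; exists false, (x ord0).
  by rewrite qsign_no_query qsign_query_bit fb.
have [b fb] : exists b, forall x, x \in D -> f x = x ord0 (+) x (lift ord0 ord0) (+) b.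
  case: f2 => f2; [exists false | exists true]; move=> x xD;
    by rewrite f2 // (xb_ord x ord0) (xb_ord x (lift ord0 ord0)) ?addbT ?addbF.
apply: (two_state_algorithm (query_bit_inj (neq_lift ord0 ord0))) => x xD.
by exists (x ord0), (x (lift ord0 ord0)); rewrite !qsign_query_bit fb.
Qed.

Theorem theorem2 (n : nat) (D : {set bits n}) (f : bits n -> bool) :
  (0 < n)%N ->
  depends_on_bits D f n ->
  (exact_1query D f <->
     (n = 1%N /\ D = [set: bits n] /\
        ((forall x, f x = xb x 0) \/ (forall x, f x = ~~ xb x 0)))
   \/
     (n = 2%N /\ (#|D| = 3%N \/ #|D| = 4%N) /\
        ((forall x, x \in D -> f x = xb x 0 (+) xb x 1) \/
         (forall x, x \in D -> f x = ~~ (xb x 0 (+) xb x 1))))).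
Proof.
move=> n_gt0 dep; split; first exact: exact_necessary.
exact: exact_sufficient.
Qed.
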